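(* Let $k\ge4$ be an integer, $\eta\in[\eta_{k+1},\eta_k)$, and $j\ge k$ an integer. Then $\angle 1z_jw_1\in(0,\pi)$.
   Context: For $\eta\in(0,\pi/3)$ let $a=\frac{e^{-i\eta}}{2\cos\eta}$, $c=\frac{1}{1-|a|^4}$, $z_j=ca^{j+1}$, $w_1=1-c|a|^2a$. For $u,v,w\in\mathbb{C}$, $\angle uvw=\arg\frac{w-v}{u-v}$ with $\arg$ taking values in $[0,2\pi)$. For integers $k\ge1$ let $\Phi_k(\eta)=(1-|a|^4)\sin((k-1)\eta)-|a|^3\sin((k-2)\eta)+|a|^k\sin\eta$; for each $k\ge4$, $\Phi_k$ has a unique zero in $(\pi/k,\pi/(k-1))$, denoted $\eta_k$. *)

From Stdlib Require Import Reals ClassicalEpsilon.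
From Coquelicot Require Import Coquelicot.
Open Scope R_scope.

Definition a_of (eta : R) : C :=
  ((/ (2 * cos eta))%R : C) * (cos eta, - sin eta)%R.

Definition c_of (eta : R) : R := / (1 - Cmod (a_of eta) ^ 4).

Definition z_of (eta : R) (j : nat) : C :=
  (RtoC (c_of eta) * Cpow (a_of eta) (S j))%C.

Definition w1_of (eta : R) : C :=
  (RtoC 1 - RtoC (c_of eta * Cmod (a_of eta) ^ 2) * a_of eta)%C.

Definition Carg (z : C) : R :=
  epsilon (inhabits 0)
    (fun t => 0 <= t < 2 * PI /\ z = (RtoC (Cmod z) * (cos t, sin t))%C).

Definition angle (u v w : C) : R := Carg ((w - v) / (u - v))%C.

Definition Phi (k : nat) (eta : R) : R :=
  let r := Cmod (a_of eta) in
  (1 - r ^ 4) * sin ((INR k - 1) * eta) - r ^ 3 * sin ((INR k - 2) * eta)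
  + r ^ k * sin eta.

From Stdlib Require Import Reals Lra Psatz ClassicalEpsilon.
From Coquelicot Require Import Coquelicot.
Open Scope R_scope.

(* Write a = r e^{-i eta} with r = 1 / (2 cos eta).  The angle at z_j lies in (0, pi)
   as soon as Im ((w_1 - z_j) conj (1 - z_j)) > 0, and this imaginary part is
   c^2 r^3 ((1 - r^4) sin eta + r^(j+1) sin (j eta)).
   For k >= 5 we have eta < pi/4, so r^2 < 1/2; then |sin (j eta)| <= j sin eta and
   j r^j <= 5 r^5 let the first term dominate.
   For k = 4, r^2 Phi_4 = (1 - r^2) (1 - 2 r^4) sin eta, so eta_4 is where r^4 = 1/2
   and r^4 < 1/2 below it.  Expanding r^n sin ((n+1) eta) as a Chebyshev polynomial in
   r^2 times sin eta settles j = 4, 5, 6, and r^(j+1) <= r^8 < 1/4 the remaining j. *)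

Lemma polar_form_upper_half (q : C) : 0 < snd q ->
  exists t, 0 <= t < 2 * PI /\ q = (RtoC (Cmod q) * (cos t, sin t))%C.
Proof.
  destruct q as [x y]; cbn [snd]; intros Hy.
  set (m := Cmod (x, y)).
  assert (Hm2 : m * m = x ^ 2 + y ^ 2).
  { unfold m, Cmod; cbn [fst snd]. rewrite sqrt_sqrt; nra. }
  assert (Hm : 0 < m) by (unfold m, Cmod; apply sqrt_lt_R0; cbn; nra).
  assert (Hxm : -1 <= x / m <= 1).
  { split; apply (Rmult_le_reg_r m); try lra; field_simplify; nra. }
  exists (acos (x / m)); split.
  - pose proof (acos_bound (x / m)); pose proof PI_RGT_0; lra.
  - rewrite cos_acos, sin_acos by exact Hxm.
    assert (Hsin : 1 - (x / m)² = (y / m) ^ 2).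
    { transitivity ((m * m - x * x) / (m * m)); [unfold Rsqr; field; lra|].
      replace (m * m - x * x) with (y ^ 2) by lra. field; lra. }
    rewrite Hsin, sqrt_pow2 by (apply Rlt_le, Rdiv_lt_0_compat; lra).
    unfold Cmult, RtoC; cbn [fst snd]. f_equal; field; lra.
Qed.

Lemma Carg_upper_half (q : C) : 0 < snd q -> 0 < Carg q < PI.
Proof.
  intros Hq.
  destruct (epsilon_spec (inhabits 0)
              (fun t => 0 <= t < 2 * PI /\ q = (RtoC (Cmod q) * (cos t, sin t))%C)
              (polar_form_upper_half q Hq)) as [Ht Hpolar].
  unfold Carg; set (t := epsilon _ _) in *.
  assert (Hsin : 0 < sin t).
  { apply (f_equal snd) in Hpolar; cbn in Hpolar.
    assert (0 <= Cmod q) by apply Cmod_ge_0. nra. }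
  split.
  - destruct (Req_dec t 0) as [E|]; [rewrite E, sin_0 in Hsin|]; lra.
  - destruct (Rlt_le_dec t PI) as [|Hle]; [assumption|].
    pose proof (sin_le_0 t Hle ltac:(lra)); lra.
Qed.

Lemma Im_Cdiv_pos (p d : C) : 0 < snd p * fst d - fst p * snd d -> 0 < snd (p / d)%C.
Proof.
  destruct p as [p1 p2], d as [d1 d2]; unfold Cdiv, Cmult, Cinv; cbn [fst snd]; intros H.
  assert (Hd : 0 < d1 ^ 2 + d2 ^ 2).
  { destruct (Req_dec d1 0) as [->|]; [destruct (Req_dec d2 0) as [->|]|]; nra. }
  replace (p1 * (- d2 / (d1 ^ 2 + d2 ^ 2)) + p2 * (d1 / (d1 ^ 2 + d2 ^ 2)))
    with ((p2 * d1 - p1 * d2) / (d1 ^ 2 + d2 ^ 2)) by (field; lra).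
  apply Rdiv_lt_0_compat; lra.
Qed.

Lemma a_of_polar (r e : R) : 2 * r * cos e = 1 -> a_of e = (r * cos e, - (r * sin e)).
Proof.
  intros Hr.
  assert (Hc : cos e <> 0) by (intro Hc; rewrite Hc in Hr; lra).
  assert (Hinv : / (2 * cos e) = r) by (rewrite <- (Rmult_1_l (/ _)), <- Hr; field; exact Hc).
  unfold a_of; rewrite Hinv; unfold Cmult, RtoC; cbn [fst snd]; f_equal; ring.
Qed.

Lemma Cmod_a_of (r e : R) : 0 < r -> 2 * r * cos e = 1 -> Cmod (a_of e) = r.
Proof.
  intros Hr He; rewrite (a_of_polar r e He); unfold Cmod; cbn [fst snd].
  replace ((r * cos e) ^ 2 + (- (r * sin e)) ^ 2) with (r ^ 2 * ((sin e)² + (cos e)²))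
    by (unfold Rsqr; ring).
  rewrite sin2_cos2, Rmult_1_r; apply sqrt_pow2; lra.
Qed.

Lemma Cpow_polar (r e : R) (n : nat) :
  Cpow (r * cos e, - (r * sin e)) n = (r ^ n * cos (INR n * e), - (r ^ n * sin (INR n * e))).
Proof.
  induction n as [|n IH]; cbn [Cpow].
  - rewrite Rmult_0_l, cos_0, sin_0; unfold RtoC; f_equal; ring.
  - rewrite IH, S_INR, Rmult_plus_distr_r, Rmult_1_l, cos_plus, sin_plus.
    unfold Cmult; cbn [fst snd pow]; f_equal; ring.
Qed.

Definition cross_factor (r e : R) (j : nat) : R :=
  (1 - r ^ 4) * sin e + r ^ S j * sin (INR j * e).

Lemma cross_product_w1_z (r e : R) (j : nat) : 0 < r < 1 -> 2 * r * cos e = 1 ->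
  let z := z_of e j in
  snd (w1_of e - z)%C * fst (1 - z)%C - fst (w1_of e - z)%C * snd (1 - z)%C
  = r ^ 3 / (1 - r ^ 4) ^ 2 * cross_factor r e j.
Proof.
  intros Hr He z.
  assert (Hr4 : r ^ 4 < 1) by (pose proof (pow_lt_1_compat r 4 ltac:(lra) ltac:(lia)); lra).
  unfold z, z_of, w1_of, c_of, cross_factor.
  rewrite (Cmod_a_of r e) by lra; rewrite (a_of_polar r e He), Cpow_polar.
  assert (Hsin : sin (INR j * e) = sin (INR (S j) * e) * cos e - cos (INR (S j) * e) * sin e).
  { rewrite <- sin_minus, S_INR; f_equal; ring. }
  rewrite Hsin; unfold Cminus, Cplus, Copp, Cmult, RtoC; cbn [fst snd].
  field; lra.
Qed.

Lemma angle_1_z_w1_in_0_PI (r e : R) (j : nat) : 0 < r < 1 -> 2 * r * cos e = 1 ->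
  0 < cross_factor r e j -> 0 < angle (RtoC 1) (z_of e j) (w1_of e) < PI.
Proof.
  intros Hr He Hpos; apply Carg_upper_half, Im_Cdiv_pos.
  rewrite (cross_product_w1_z r e j Hr He).
  apply Rmult_lt_0_compat; [|exact Hpos].
  apply Rdiv_lt_0_compat; [apply pow_lt; lra|].
  apply pow_lt; pose proof (pow_lt_1_compat r 4 ltac:(lra) ltac:(lia)); lra.
Qed.

Lemma sin_mul_recurrence (e : R) (n : nat) :
  sin (INR (S (S n)) * e) = 2 * cos e * sin (INR (S n) * e) - sin (INR n * e).
Proof.
  rewrite !S_INR.
  replace ((INR n + 1 + 1) * e) with ((INR n + 1) * e + e) by ring.
  replace (INR n * e) with ((INR n + 1) * e - e) by ring.
  rewrite sin_plus, sin_minus; ring.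
Qed.

(* [chebU (r ^ 2) n = r ^ n * U_n (1 / (2 r))] for the Chebyshev polynomials [U_n]
   of the second kind. *)
Fixpoint chebU (t : R) (n : nat) : R :=
  match n with
  | O | S O => 1
  | S (S m as n') => chebU t n' - t * chebU t m
  end.

Lemma sin_mul_chebU (r e : R) (n : nat) : 2 * r * cos e = 1 ->
  r ^ n * sin (INR (S n) * e) = chebU (r ^ 2) n * sin e.
Proof.
  intros He.
  enough (r ^ n * sin (INR (S n) * e) = chebU (r ^ 2) n * sin e /\
          r ^ S n * sin (INR (S (S n)) * e) = chebU (r ^ 2) (S n) * sin e) by tauto.
  induction n as [|n [IH IHS]].
  - replace (INR 2 * e) with (2 * e) by (cbn; ring).
    rewrite sin_2a; cbn; rewrite !Rmult_1_l; split; [reflexivity|].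
    transitivity (sin e * (2 * r * cos e)); [ring | rewrite He; ring].
  - split; [exact IHS|].
    rewrite sin_mul_recurrence.
    change (chebU (r ^ 2) (S (S n))) with (chebU (r ^ 2) (S n) - r ^ 2 * chebU (r ^ 2) n).
    rewrite Rmult_minus_distr_r, <- IHS, (Rmult_assoc (r ^ 2)), <- IH.
    transitivity (r ^ S n * (2 * r * cos e) * sin (INR (S (S n)) * e)
                  - r ^ 2 * (r ^ n * sin (INR (S n) * e))); [cbn [pow]; ring|].
    rewrite He; ring.
Qed.

Lemma cross_factor_chebU (r e : R) (j : nat) : 2 * r * cos e = 1 ->
  cross_factor r e (S j) = (1 - r ^ 4 + r ^ 2 * chebU (r ^ 2) j) * sin e.
Proof.
  intros He; unfold cross_factor.
  replace (r ^ S (S j)) with (r ^ 2 * r ^ j) by (cbn [pow]; ring).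
  rewrite Rmult_assoc, (sin_mul_chebU r e j He); ring.
Qed.

Lemma cross_factor_pos_quartic (r e : R) (j : nat) :
  0 < r -> 2 * r * cos e = 1 -> r ^ 4 < 1 / 2 -> 1 / 2 < sin e -> (4 <= j)%nat ->
  0 < cross_factor r e j.
Proof.
  intros Hr He Hr4 Hs Hj.
  set (t := r ^ 2).
  assert (Ht : 0 < t < 1) by (unfold t; split; nra).
  assert (Ht2 : t * t < 1 / 2) by (unfold t; nra).
  destruct (Nat.le_gt_cases j 6) as [Hj6|Hj7].
  - assert (Hcases : j = 4%nat \/ j = 5%nat \/ j = 6%nat) by lia.
    destruct Hcases as [-> | [-> | ->]]; rewrite cross_factor_chebU by exact He;
      apply Rmult_lt_0_compat; try lra; cbn [chebU]; fold t;
      replace (r ^ 4) with (t * t) by (unfold t; ring); nra.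
  - assert (Hr1 : r < 1) by (unfold t in Ht; nra).
    assert (Hpow : r ^ S j <= r ^ 8).
    { replace (S j) with (8 + (j - 7))%nat by lia; rewrite pow_add.
      assert (r ^ (j - 7) <= 1) by (rewrite <- (pow1 (j - 7)); apply pow_incr; lra).
      pose proof (pow_lt r 8 Hr); nra. }
    assert (Hr8 : r ^ 8 < 1 / 4) by (replace (r ^ 8) with (r ^ 4 * r ^ 4) by ring; nra).
    pose proof (SIN_bound (INR j * e)). pose proof (pow_lt r (S j) Hr).
    unfold cross_factor; nra.
Qed.

Lemma Rabs_sin_mul_le (x : R) (n : nat) : 0 <= sin x -> Rabs (sin (INR n * x)) <= INR n * sin x.
Proof.
  intros Hs; induction n as [|n IH].
  - cbn [INR]; rewrite !Rmult_0_l, sin_0, Rabs_R0; lra.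
  - rewrite S_INR, Rmult_plus_distr_r, Rmult_1_l, sin_plus.
    eapply Rle_trans; [apply Rabs_triang|]; rewrite !Rabs_mult, (Rabs_right (sin x)) by lra.
    assert (Rabs (cos x) <= 1) by (apply Rabs_le, COS_bound).
    assert (Rabs (cos (INR n * x)) <= 1) by (apply Rabs_le, COS_bound).
    pose proof (Rabs_pos (sin (INR n * x))); nra.
Qed.

Lemma nat_mul_pow_decreasing (r : R) (m n : nat) : 0 <= r -> (INR m + 1) * r <= INR m ->
  (m <= n)%nat -> INR n * r ^ n <= INR m * r ^ m.
Proof.
  intros Hr Hm Hmn.
  assert (r < 1) by (pose proof (pos_INR m); nra).
  induction Hmn as [|n Hmn IH]; [lra|].
  assert (INR m <= INR n) by (apply le_INR; exact Hmn).
  assert ((INR n + 1) * r <= INR n) by nra.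
  pose proof (pow_le r n Hr).
  rewrite S_INR; cbn [pow]; nra.
Qed.

Lemma cross_factor_pos_square (r e : R) (j : nat) :
  0 < r -> r ^ 2 < 1 / 2 -> 0 < sin e -> (5 <= j)%nat -> 0 < cross_factor r e j.
Proof.
  intros Hr Hr2 Hs Hj.
  assert (Hdecay : INR j * r ^ j <= 5 * r ^ 5).
  { assert (r < 5 / 6) by nra.
    replace 5 with (INR 5) by (cbn; ring); apply nat_mul_pow_decreasing; [lra | cbn; lra | exact Hj]. }
  pose proof (pow_lt r 2 Hr).
  assert (Hr4 : r ^ 4 < 1 / 4) by (replace (r ^ 4) with (r ^ 2 * r ^ 2) by ring; nra).
  assert (Hr6 : r ^ 6 < 1 / 8) by (replace (r ^ 6) with (r ^ 4 * r ^ 2) by ring; nra).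
  pose proof (Rabs_sin_mul_le e j (Rlt_le _ _ Hs)) as Hsin.
  assert (Hsj : - (INR j * sin e) <= sin (INR j * e)).
  { pose proof (Rle_abs (- sin (INR j * e))); rewrite Rabs_Ropp in *; lra. }
  assert (Hcoef : r ^ S j * INR j <= 5 * r ^ 6).
  { replace (r ^ S j * INR j) with (r * (INR j * r ^ j)) by (cbn [pow]; ring).
    replace (r ^ 6) with (r * r ^ 5) by ring; nra. }
  pose proof (pow_lt r (S j) Hr).
  assert (Hlow : - (5 * r ^ 6) * sin e <= r ^ S j * sin (INR j * e)) by nra.
  unfold cross_factor; nra.
Qed.

(* The modulus [|a|] when [cos eta > 0]. *)
Definition rho (e : R) : R := / (2 * cos e).

Lemma rho_spec (e : R) : 0 <= e < PI / 3 -> 0 < rho e < 1 /\ 2 * rho e * cos e = 1.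
Proof.
  intros He; pose proof PI_RGT_0.
  assert (Hc : 1 / 2 < cos e).
  { rewrite <- cos_PI3; apply cos_decreasing_1; lra. }
  unfold rho; split; [split|].
  - apply Rinv_0_lt_compat; lra.
  - rewrite <- Rinv_1; apply Rinv_lt_contravar; lra.
  - field; lra.
Qed.

Lemma rho_lt (x y : R) : 0 <= x < y -> y < PI / 2 -> rho x < rho y.
Proof.
  intros Hxy Hy; pose proof PI_RGT_0.
  assert (0 < cos y) by (apply cos_gt_0; lra).
  assert (cos y < cos x) by (apply cos_decreasing_1; lra).
  unfold rho; apply Rinv_lt_contravar; nra.
Qed.

Lemma rho_sq_lt_half (e : R) : 0 <= e < PI / 4 -> rho e ^ 2 < 1 / 2.
Proof.
  intros He; pose proof PI_RGT_0.
  assert (H2e : 0 < cos (2 * e)) by (apply cos_gt_0; lra).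
  rewrite cos_2a_cos in H2e.
  unfold rho; rewrite pow_inv; replace (1 / 2) with (/ 2) by field.
  apply Rinv_lt_contravar; nra.
Qed.

Lemma Phi4_eq (r e : R) : 0 < r -> 2 * r * cos e = 1 ->
  r ^ 2 * Phi 4 e = (1 - r ^ 2) * (1 - 2 * r ^ 4) * sin e.
Proof.
  intros Hr He; unfold Phi; rewrite (Cmod_a_of r e Hr He).
  replace (INR 4 - 1) with (INR 3) by (cbn; ring).
  replace (INR 4 - 2) with (INR 2) by (cbn; ring).
  pose proof (sin_mul_chebU r e 2 He) as H3; pose proof (sin_mul_chebU r e 1 He) as H2.
  cbn [chebU] in H2, H3.
  transitivity ((1 - r ^ 4) * (r ^ 2 * sin (INR 3 * e)) - r ^ 4 * (r ^ 1 * sin (INR 2 * e))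
                + r ^ 6 * sin e); [ring|].
  rewrite H3, H2; ring.
Qed.

Lemma rho_pow4_lt_half (e e4 : R) : 0 <= e < e4 -> e4 < PI / 3 -> Phi 4 e4 = 0 ->
  rho e ^ 4 < 1 / 2.
Proof.
  intros He He4 HPhi; pose proof PI_RGT_0.
  destruct (rho_spec e4) as [Hr4 Hre4]; [lra|].
  assert (Hs4 : 0 < sin e4) by (apply sin_gt_0; lra).
  assert (Hroot : rho e4 ^ 4 = 1 / 2).
  { pose proof (Phi4_eq (rho e4) e4 ltac:(lra) Hre4) as E; rewrite HPhi, Rmult_0_r in E.
    assert (0 < 1 - rho e4 ^ 2) by nra.
    symmetry in E; apply Rmult_integral in E as [E|E]; [apply Rmult_integral in E as [E|E]|]; lra. }
  assert (Hlt : rho e < rho e4) by (apply rho_lt; lra).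
  destruct (rho_spec e) as [Hr _]; [lra|].
  rewrite <- Hroot; replace 4%nat with (2 * 2)%nat by reflexivity; rewrite !pow_mult.
  assert (rho e ^ 2 < rho e4 ^ 2) by nra. nra.
Qed.

Theorem lemma5p2 (k : nat) (eta_k eta_k1 : R) (eta : R) (j : nat) :
  (4 <= k)%nat ->
  PI / INR k < eta_k < PI / (INR k - 1) -> Phi k eta_k = 0 ->
  PI / INR (k + 1) < eta_k1 < PI / INR k -> Phi (k + 1) eta_k1 = 0 ->
  eta_k1 <= eta < eta_k ->
  (k <= j)%nat ->
  0 < angle (RtoC 1) (z_of eta j) (w1_of eta) < PI.
Proof.
  intros Hk [_ Hk_hi] HPhi [Hk1_lo _] _ [Hlo Hhi] Hj.
  pose proof PI_RGT_0.
  assert (HK : 4 <= INR k) by (replace 4 with (INR 4) by (cbn; ring); apply le_INR, Hk).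
  assert (Hpos : 0 < eta).
  { assert (0 < PI / INR (k + 1)) by (apply Rdiv_lt_0_compat; [lra | apply lt_0_INR; lia]). lra. }
  assert (Hthird : PI / (INR k - 1) <= PI / 3).
  { apply Rmult_le_compat_l; [lra|]; apply Rinv_le_contravar; lra. }
  destruct (rho_spec eta) as [Hr Hre]; [lra|].
  apply (angle_1_z_w1_in_0_PI (rho eta)); [exact Hr | exact Hre|].
  destruct (Nat.eq_dec k 4) as [->|Hk5].
  - apply cross_factor_pos_quartic; [lra | exact Hre | | | exact Hj].
    + apply (rho_pow4_lt_half eta eta_k); lra.
    + replace (INR (4 + 1)) with 5 in Hk1_lo by (cbn; ring).
      rewrite <- sin_PI6; apply sin_increasing_1; lra.
  - assert (HK5 : 5 <= INR k) by (replace 5 with (INR 5) by (cbn; ring); apply le_INR; lia).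
    assert (Hquarter : PI / (INR k - 1) <= PI / 4).
    { apply Rmult_le_compat_l; [lra|]; apply Rinv_le_contravar; lra. }
    apply cross_factor_pos_square; [lra | apply rho_sq_lt_half; lra | | lia].
    apply sin_gt_0; lra.
Qed.
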